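(* Let $d\ge2$ and let $N_1,\dots,N_d$ be positive integers. With $\mathbf{N}=(N_1,\dots,N_d)$ and $\mathbf{N}'=(N_1,\dots,N_{d-1})$, \[ \operatorname{disc}(\mathcal{A}_{\mathbf{N}})\le\max\Big(\operatorname{disc}(\mathcal{A}_{\mathbf{N}'}),\sqrt{6N_d\log(2N_1\cdots N_d)}\Big). \]
   Context: $[N]=\{1,\dots,N\}$; $\log$ is the natural logarithm. An arithmetic progression in $k$ dimensions is a set $\{\mathbf{a}+i\mathbf{b}: i=0,\dots,l-1\}$ with $\mathbf{a},\mathbf{b}\in\mathbb{Z}^k$, $\mathbf{b}\ne\mathbf{0}$, $l\in\mathbb{N}$. For $\mathbf{M}=(M_1,\dots,M_k)$, $\mathcal{A}_{\mathbf{M}}$ is the family of arithmetic progressions in $k$ dimensions contained in $\Omega=[M_1]\times\cdots\times[M_k]$, and $\operatorname{disc}(\mathcal{A}_{\mathbf{M}})=\min_{\chi:\Omega\to\{1,-1\}}\max_{A\in\mathcal{A}_{\mathbf{M}}}|\sum_{x\in A}\chi(x)|$. *)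

From HB Require Import structures.
From mathcomp Require Import all_boot all_order all_algebra.
From mathcomp Require Import boolp.
Set Implicit Arguments. Unset Strict Implicit. Unset Printing Implicit Defensive.
Import Order.TTheory GRing.Theory Num.Theory.
Local Open Scope ring_scope.

(* The box Omega = [M_1] x ... x [M_k], with k = size M and M_i = nth 0 M i.
   A point x is stored as a dependent finite function; its i-th coordinate
   is the integer (x i) + 1 in {1, ..., M_i}. *)
Definition pt (M : seq nat) := {dffun forall i : 'I_(size M), 'I_(nth 0%N M i)}.

Definition coord (M : seq nat) (x : pt M) (j : 'I_(size M)) : int :=
  ((x j : nat)%:Z + 1)%R.

Definition isAP (M : seq nat) (A : {set pt M}) : Prop :=
  exists (a b : 'I_(size M) -> int) (l : nat),
    (exists j, b j != 0) /\
    (forall i : nat, (i < l)%N ->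
        exists x : pt M, forall j, coord x j = a j + i%:Z * b j) /\
    (forall x : pt M, x \in A <->
        exists2 i : nat, (i < l)%N & forall j, coord x j = a j + i%:Z * b j).

Definition col_sum (M : seq nat) (chi : {ffun pt M -> bool}) (A : {set pt M}) : int :=
  \sum_(x in A) (if chi x then 1 else -1).

Definition max_disc (M : seq nat) (chi : {ffun pt M -> bool}) : nat :=
  \max_(A : {set pt M} | `[< isAP A >]) absz (col_sum chi A).

Definition disc (M : seq nat) : nat :=
  max_disc [arg min_(chi < [ffun=> true] : {ffun pt M -> bool}) max_disc chi].

From Pilot Require Import Defs.
From HB Require Import structures.
From mathcomp Require Import all_boot all_order all_algebra.
From mathcomp Require Import all_classical all_reals exp.
From mathcomp Require Import topology normedtype sequences.
From mathcomp Require Import zify ring lra.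
Import Order.TTheory GRing.Theory Num.Theory.
Import numFieldNormedType.Exports.
Local Open Scope ring_scope.
Set Implicit Arguments. Unset Strict Implicit. Unset Printing Implicit Defensive.

(* Let c' be an optimal colouring of the box of N' and e a sign vector on [N_d];
   colour x = (x', x_d) by c'(x') e(x_d).  A progression with constant last
   coordinate is, up to the sign e(x_d), a progression of the smaller box, so its
   discrepancy is at most disc(N').  Any other progression meets each hyperplane
   x_d = j at most once, so its colour sum is sum_j c_j e(j) with |c_j| <= 1, and
   the Chernoff bound (via cosh x <= exp(x^2/2)) shows that this sum exceeds t in
   absolute value for at most 2 * 2^N_d * exp(-t^2 / (2 N_d)) of the 2^N_d sign
   vectors.  Such a progression is determined by its first two points and its
   length l <= N_d, so there are at most |Omega|^2 (N_d + 1) of them, and for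
   t = sqrt(6 N_d log(2|Omega|)) the union bound leaves a good e. *)

Lemma expn2_fact_le_fact_double m : (2 ^ m * m`! <= (m.*2)`!)%N.
Proof.
elim: m => [//|m IHm]; rewrite doubleS !factS expnS mulnACA [X in (_ <= X)%N]mulnA.
by apply: leq_mul IHm; nia.
Qed.

Section CoshBound.
Local Open Scope classical_set_scope.
Variable R : realType.
Implicit Types x : R.

Lemma exp_coeff_addN x i :
  exp_coeff x i + exp_coeff (- x) i = if odd i then 0 else exp_coeff x i *+ 2.
Proof.
rewrite /exp_coeff /= exprNn -signr_odd.
by case: (odd i); rewrite ?expr1 ?expr0 ?mulN1r ?mul1r ?mulNr ?subrr // mulr2n.
Qed.

Lemma exp_coeff_addN_ge0 x i : 0 <= exp_coeff x i + exp_coeff (- x) i.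
Proof.
rewrite exp_coeff_addN; case: ifPn => // even_i.
by apply: mulrn_wge0; rewrite /exp_coeff /= mulr_ge0 ?invr_ge0 ?exprn_even_ge0.
Qed.

Lemma exp_coeff_double_le x m : exp_coeff x m.*2 <= exp_coeff (x ^+ 2 / 2) m.
Proof.
rewrite /exp_coeff /= expr_div_n -exprM mul2n -mulrA -invfM.
rewrite ler_wpM2l ?exprn_even_ge0 ?odd_double // -natrX -natrM.
rewrite lef_pV2 ?posrE ?ltr0n ?muln_gt0 ?expn_gt0 ?fact_gt0 // ler_nat.
exact: expn2_fact_le_fact_double.
Qed.

Lemma sum_exp_coeff_addN_le x m :
  \sum_(0 <= i < m.*2) (exp_coeff x i + exp_coeff (- x) i)
    <= (\sum_(0 <= i < m) exp_coeff (x ^+ 2 / 2) i) *+ 2.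
Proof.
elim: m => [|m IHm]; first by rewrite !big_geq ?mul0rn.
rewrite doubleS !big_nat_recr //= mulrnDl -addrA lerD //.
by rewrite !exp_coeff_addN /= odd_double /= addr0 lerMn2r exp_coeff_double_le.
Qed.

Lemma expR_addN_le x : expR x + expR (- x) <= expR (x ^+ 2 / 2) *+ 2.
Proof.
have cvg_sum (y : R) : series (exp_coeff y) @ \oo --> expR y := is_cvg_series_exp_coeff y.
have := ler_cvg_to (cvgD (cvg_sum x) (cvg_sum (- x)))
  (cvgMn (n := 2) (cvg_sum (x ^+ 2 / 2))).
apply; near=> n; rewrite /= /series /= fctE -big_split /=.
apply: le_trans (sum_exp_coeff_addN_le x n).
rewrite (@big_cat_nat _ _ _ n 0 n.*2) ?leq0n -?addnn ?leq_addl //= lerDl.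
by apply: sumr_ge0 => i _; exact: exp_coeff_addN_ge0.
Unshelve. all: by end_near.
Qed.

End CoshBound.

Definition sgb {R : pzRingType} (b : bool) : R := if b then 1 else -1.

Lemma sgb_eq (R : pzRingType) (b c : bool) : sgb (b == c) = sgb b * sgb c :> R.
Proof. by case: b; case: c; rewrite /sgb /= ?mulrNN ?mul1r ?mulr1. Qed.

Lemma normr_sgb (R : numDomainType) (b : bool) : `|sgb b : R| = 1.
Proof. by case: b; rewrite /sgb ?normrN normr1. Qed.

Lemma intr_sgb (R : pzRingType) (b : bool) : (sgb b : int)%:~R = sgb b :> R.
Proof. by case: b; rewrite /sgb ?rmorphN rmorph1. Qed.

Section SignSums.
Variables (R : realType) (K : nat).
Implicit Types (c : 'I_K -> R) (t : R).
Local Notation signs := {ffun 'I_K -> bool}.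

Lemma sum_expR_sign_sum c (l : R) : (forall j, `|c j| <= 1) ->
  \sum_(e : signs) expR (l * \sum_j c j * sgb (e j))
    <= (expR (l ^+ 2 / 2) *+ 2) ^+ K.
Proof.
move=> c_le1.
under eq_bigr => e _ do rewrite mulr_sumr expR_sum.
rewrite -(bigA_distr_bigA (fun j b => expR (l * (c j * sgb b)))) /=.
rewrite -[K in X in _ <= X]card_ord -prodr_const.
apply: ler_prod => j _; rewrite sumr_ge0 => [|b _]; last exact: expR_ge0.
rewrite big_bool /sgb /= mulr1 mulrN1 mulrN.
apply: le_trans (expR_addN_le _) _; rewrite lerMn2r /= ler_expR ler_pM2r ?invr_gt0 //.
by rewrite exprMn ler_piMr ?sqr_ge0 // -real_normK ?num_real // exprn_ile1 ?c_le1.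
Qed.

Lemma card_sign_sum_gt c t : (0 < K)%N -> 0 <= t -> (forall j, `|c j| <= 1) ->
  #|[set e : signs | t < \sum_j c j * sgb (e j)]|%:R
    <= 2 ^+ K * expR (- t ^+ 2 / (2 * K%:R)).
Proof.
move=> K_gt0 t_ge0 c_le1; set A := [set e | _].
pose l := t / K%:R.
have K_pos : (0 : R) < K%:R by rewrite ltr0n.
have l_ge0 : 0 <= l := divr_ge0 t_ge0 (ler0n _ _).
have markov : #|A|%:R * expR (l * t) <=
    \sum_(e : signs) expR (l * \sum_j c j * sgb (e j)).
  rewrite mulr_natl -sumr_const [X in _ <= X](bigID (mem A)) /=.
  rewrite -[X in X <= _]addr0 lerD ?sumr_ge0 // => [|e _]; last exact: expR_ge0.
  by apply: ler_sum => e; rewrite inE => /ltW ?; rewrite ler_expR ler_wpM2l.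
have mgf := le_trans markov (sum_expR_sign_sum l c_le1).
rewrite exprMn_n -expRM_natl -[X in _ <= X]mulr_natl natrX in mgf.
have -> : - t ^+ 2 / (2 * K%:R) = K%:R * (l ^+ 2 / 2) - l * t.
  by rewrite /l; field; rewrite lt0r_neq0.
by rewrite expRB mulrA ler_pdivlMr ?expR_gt0.
Qed.

Lemma card_norm_sign_sum_gt c t : (0 < K)%N -> 0 <= t -> (forall j, `|c j| <= 1) ->
  #|[set e : signs | t < `|\sum_j c j * sgb (e j)| ]|%:R
    <= 2 * 2 ^+ K * expR (- t ^+ 2 / (2 * K%:R)).
Proof.
move=> K_gt0 t_ge0 c_le1.
have Nc_le1 j : `|(- c) j| <= 1 by rewrite normrN.
set pos := [set e : signs | t < \sum_j c j * sgb (e j)].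
set neg := [set e : signs | t < \sum_j (- c) j * sgb (e j)].
have split_norm : [set e : signs | t < `|\sum_j c j * sgb (e j)| ] \subset pos :|: neg.
  apply/fintype.subsetP => e; rewrite !inE ltr_normr -sumrN.
  by under [X in _ -> _ || (_ < X)]eq_bigr => j _ do rewrite /= mulNr.
apply: (le_trans (y := (#|pos| + #|neg|)%:R)).
  by rewrite ler_nat (leq_trans (subset_leq_card split_norm)) ?cardsU ?leq_subr.
rewrite natrD -mulrA mulr2n mulrDl !mul1r.
by rewrite lerD ?card_sign_sum_gt.
Qed.

Lemma card_norm_sign_sum_inj_gt (X : finType) (A : {set X}) (f : X -> 'I_K)
    (w : X -> R) t :
  (0 < K)%N -> 0 <= t -> {in A &, injective f} -> (forall x, `|w x| <= 1) ->
  #|[set e : signs | t < `|\sum_(x in A) w x * sgb (e (f x))| ]|%:R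
    <= 2 * 2 ^+ K * expR (- t ^+ 2 / (2 * K%:R)).
Proof.
move=> K_gt0 t_ge0 f_inj w_le1.
pose c j := \sum_(x in A | f x == j) w x.
have c_le1 j : `|c j| <= 1.
  have [x0 /andP[x0A /eqP fx0] | none] := pickP [pred x in A | f x == j].
    rewrite /c (big_pred1 x0) ?w_le1 // => x /=.
    apply/andP/eqP => [[xA /eqP fx] | ->]; last by rewrite x0A fx0.
    by apply: f_inj; rewrite // fx fx0.
  by rewrite /c (big_pred0 _ _ _ _ none) normr0.
have sumE e : \sum_(x in A) w x * sgb (e (f x)) = \sum_j c j * sgb (e j).
  rewrite (partition_big f xpredT) //=; apply: eq_bigr => j _.
  by rewrite mulr_suml; apply: eq_bigr => x /andP[_ /eqP ->].
under eq_finset => e do rewrite sumE.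
exact: card_norm_sign_sum_gt.
Qed.

End SignSums.

Lemma exists_avoid_all (R : realDomainType) (T E : finType) (Q : T -> pred E) (B : R) :
  (forall tau, #|[set e | Q tau e]|%:R <= B) -> #|T|%:R * B < #|E|%:R ->
  exists e, forall tau, ~~ Q tau e.
Proof.
move=> Q_le lt_card.
have [e /forallP avoid | all_bad] := pickP [pred e | [forall tau, ~~ Q tau e]].
  by exists e.
suff : #|E|%:R <= #|T|%:R * B by rewrite leNgt lt_card.
have covered e : 1 <= \sum_tau (if Q tau e then 1 else 0) :> R.
  have /forallPn [tau] := negbT (all_bad e); rewrite negbK => Qe.
  by rewrite (bigD1 tau) //= Qe lerDl sumr_ge0 // => tau' _; case: ifP.
rewrite -sum1_card natr_sum (le_trans (ler_sum _ (fun e _ => covered e))) //.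
rewrite exchange_big mulr_natl -sumr_const ler_sum // => tau _.
by rewrite -big_mkcond /= sumr_const -cardsE Q_le.
Qed.

Section Box.
Variable M : seq nat.
Implicit Types (x y : pt M) (A : {set pt M}) (chi : {ffun pt M -> bool}).

Lemma card_pt : #|pt M| = (\prod_(n <- M) n)%N.
Proof.
rewrite card_dep_ffun foldrE big_map big_enum /= (big_nth 0%N) big_mkord.
by apply: eq_bigr => i _; rewrite card_ord.
Qed.

Lemma coord_inj x y j : Defs.coord x j = Defs.coord y j -> x j = y j.
Proof. by rewrite /Defs.coord => /addIr [] /val_inj. Qed.

Lemma pt_ext x y : (forall j, Defs.coord x j = Defs.coord y j) -> x = y.
Proof. by move=> eq_xy; apply/ffunP => j; apply: coord_inj. Qed.

Lemma coord_bounds x j : 1 <= Defs.coord x j <= (nth 0%N M j)%:Z.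
Proof. by rewrite /Defs.coord; have := ltn_ord (x j); lia. Qed.

Lemma col_sum_sgb chi A : col_sum chi A = \sum_(x in A) sgb (chi x).
Proof. by []. Qed.

Lemma leq_max_disc chi A : isAP A -> (absz (col_sum chi A) <= max_disc chi)%N.
Proof. by move=> A_ap; apply: (leq_bigmax_cond A); apply/asboolP. Qed.

Lemma disc_le_max_disc chi : (disc M <= max_disc chi)%N.
Proof. by rewrite /disc; case: arg_minnP => // chi0 _; apply. Qed.

Lemma disc_ler (R : realDomainType) chi (r : R) : 0 <= r ->
  (forall A, isAP A -> (absz (col_sum chi A))%:R <= r) -> (disc M)%:R <= r.
Proof.
move=> r_ge0 ap_le; apply: le_trans (_ : (max_disc chi)%:R <= r).
  by rewrite ler_nat disc_le_max_disc.
rewrite /max_disc; elim/big_ind: _ => // [m n | A /asboolP]; last exact: ap_le.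
by rewrite /maxn; case: ifP.
Qed.

Definition ap_point (a b : 'I_(size M) -> int) (i : nat) x : Prop :=
  forall j, Defs.coord x j = a j + i%:Z * b j.

Definition progression A (a b : 'I_(size M) -> int) (l : nat) : Prop :=
  (exists j, b j != 0) /\ (forall i, (i < l)%N -> exists x, ap_point a b i x) /\
  (forall x, x \in A <-> exists2 i, (i < l)%N & ap_point a b i x).

Definition ap_set x0 x1 (k : nat) : {set pt M} :=
  [set x | [exists i : 'I_k, [forall j,
     Defs.coord x j ==
       Defs.coord x0 j + (i : nat)%:Z * (Defs.coord x1 j - Defs.coord x0 j)]]].

Section ProgressionData.
Variables (A : {set pt M}) (a b : 'I_(size M) -> int) (l : nat).
Hypothesis A_ap : progression A a b l.

Lemma progression_mem x : x \in A <-> exists2 i, (i < l)%N & ap_point a b i x.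
Proof. by case: A_ap => _ [_]; apply. Qed.

Lemma progression_point i : (i < l)%N -> exists x, ap_point a b i x.
Proof. by case: A_ap => _ [+ _]; apply. Qed.

Lemma progression_inj j0 : b j0 != 0 -> {in A &, injective (fun x : pt M => x j0)}.
Proof.
move=> b_neq0 x y /progression_mem[i _ x_i] /progression_mem[i' _ y_i'] eq_j0.
have [eq_ii'] : i%:Z = i'.
  apply: (mulIf b_neq0); apply: (addrI (a j0)).
  by rewrite -x_i -y_i' /Defs.coord eq_j0.
by apply: pt_ext => j; rewrite x_i y_i' eq_ii'.
Qed.

Lemma progression_size j0 : b j0 != 0 -> (l <= nth 0%N M j0)%N.
Proof.
move=> b_neq0; case: (posnP l) => [-> // | l_gt0].
have [x0 x0_0] := progression_point l_gt0.
have [x1 x1_l] : exists x1, ap_point a b l.-1 x1.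
  by apply: progression_point; rewrite ltn_predL.
have := coord_bounds x0 j0; have := coord_bounds x1 j0.
rewrite x0_0 x1_l mul0r addr0 -subn1.
nia.
Qed.

Lemma progression_ap_set : (0 < l)%N -> exists x0 x1, A = ap_set x0 x1 l.
Proof.
move=> l_gt0; have [x0 x0_0] := progression_point l_gt0.
have [x1 line] : exists x1, forall i, (i < l)%N -> forall j,
    Defs.coord x0 j + i%:Z * (Defs.coord x1 j - Defs.coord x0 j) = a j + i%:Z * b j.
  case: (ltnP 1 l) => [l_gt1 | l_le1].
    have [x1 x1_1] := progression_point l_gt1.
    by exists x1 => i _ j; rewrite x0_0 x1_1; ring.
  exists x0 => i i_lt j; have -> : i = 0%N by lia.
  by rewrite x0_0; ring.
exists x0, x1; apply/setP => x; rewrite inE.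
apply/idP/existsP => [/progression_mem[i i_lt x_i] | [i /forallP x_i]].
  by exists (Ordinal i_lt); apply/forallP => j; rewrite x_i line.
by apply/progression_mem; exists i => // j; rewrite (eqP (x_i j)) line.
Qed.

End ProgressionData.

End Box.

Definition front (N : seq nat) := take (size N).-1 N.

Section Projection.
Variable N : seq nat.
Implicit Types (x y : pt N) (A : {set pt N}).

Lemma size_front : size (front N) = (size N).-1.
Proof. by rewrite size_takel // leq_pred. Qed.

Lemma size_front_le : (size (front N) <= size N)%N.
Proof. by rewrite size_front leq_pred. Qed.

Definition widen_front (i : 'I_(size (front N))) : 'I_(size N) :=
  widen_ord size_front_le i.

Lemma nth_front (i : 'I_(size (front N))) :
  nth 0%N (front N) i = nth 0%N N (widen_front i).
Proof. by case: i => /= i; rewrite size_front => i_lt; rewrite nth_take. Qed.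

Lemma proj_front_subproof x (i : 'I_(size (front N))) :
  (x (widen_front i) < nth 0%N (front N) i)%N.
Proof. by rewrite nth_front. Qed.

Definition proj_front x : pt (front N) :=
  [ffun i => Ordinal (proj_front_subproof x i)].

Lemma coord_proj_front x i : Defs.coord (proj_front x) i = Defs.coord x (widen_front i).
Proof. by rewrite /Defs.coord ffunE. Qed.

Lemma progression_proj A a b l :
  progression A a b l -> (exists j, b (widen_front j) != 0) ->
  progression (proj_front @: A) (a \o widen_front) (b \o widen_front) l.
Proof.
move=> A_ap b_neq0; split; [exact: b_neq0 | split => [i i_lt | y]].
  have [x x_i] := progression_point A_ap i_lt.
  by exists (proj_front x) => j; rewrite coord_proj_front x_i.
split=> [/imsetP[x /(progression_mem A_ap)[i i_lt x_i] ->] | [i i_lt y_i]].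
  by exists i => // j; rewrite coord_proj_front x_i.
have [x x_i] := progression_point A_ap i_lt.
have -> : y = proj_front x by apply: pt_ext => j; rewrite y_i coord_proj_front x_i.
by apply: imset_f; apply/(progression_mem A_ap); exists i.
Qed.

Variable lst : 'I_(size N).
Hypothesis lstE : lst = (size N).-1 :> nat.

Lemma ord_split_lst (j : 'I_(size N)) : j = lst \/ exists j', j = widen_front j'.
Proof.
case: (eqVneq j lst) => [-> | j_neq]; [by left | right].
have j_lt : (j < size (front N))%N.
  have j_neq' : (j : nat) <> lst by move/val_inj; apply/eqP.
  by rewrite size_front; have := ltn_ord j; lia.
by exists (Ordinal j_lt); apply: val_inj.
Qed.

Lemma exists_front_neq0 (b : 'I_(size N) -> int) :
  b lst = 0 -> (exists j, b j != 0) -> exists j, b (widen_front j) != 0.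
Proof.
move=> b0 [j b_neq0]; case: (ord_split_lst j) => [j_lst | [j' j_front]].
  by move: b_neq0; rewrite j_lst b0 eqxx.
by exists j'; rewrite -j_front.
Qed.

Lemma proj_front_lst_inj x y : proj_front x = proj_front y -> x lst = y lst -> x = y.
Proof.
move=> eq_proj eq_lst; apply: pt_ext => j.
case: (ord_split_lst j) => [-> | [j' ->]]; first by rewrite /Defs.coord eq_lst.
by rewrite -!coord_proj_front eq_proj.
Qed.

Lemma progression_slice A a b l : b lst = 0 -> progression A a b l ->
  {in A &, forall x y, x lst = y lst}.
Proof.
move=> b0 A_ap x y /(progression_mem A_ap)[i _ x_i].
move=> /(progression_mem A_ap)[i' _ y_i'].
by apply: coord_inj; rewrite x_i y_i' b0 !mulr0.
Qed.

Definition lst_injb A : bool := #|[set x lst | x : pt N in A]| == #|A|.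

Lemma lst_injbP A : reflect {in A &, injective (fun x : pt N => x lst)} (lst_injb A).
Proof. exact: imset_injP. Qed.

Local Notation K := (nth 0%N N lst).

Definition prod_col (c0 : {ffun pt (front N) -> bool}) (e : {ffun 'I_K -> bool}) :
  {ffun pt N -> bool} := [ffun x => c0 (proj_front x) == e (x lst)].

Variable c0 : {ffun pt (front N) -> bool}.

Lemma col_sum_prod_col (R : pzRingType) e A :
  (col_sum (prod_col c0 e) A)%:~R
    = \sum_(x in A) sgb (c0 (proj_front x)) * sgb (e (x lst)) :> R.
Proof.
rewrite col_sum_sgb rmorph_sum /=; apply: eq_bigr => x _.
by rewrite intr_sgb ffunE sgb_eq.
Qed.

Lemma col_sum_prod_col_slice e A a b l : b lst = 0 -> progression A a b l ->
  (absz (col_sum (prod_col c0 e) A) <= max_disc c0)%N.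
Proof.
move=> b0 A_ap; have [-> | [x0 x0A]] := set_0Vmem A; first by rewrite /col_sum big_set0.
have slice := progression_slice b0 A_ap.
have proj_inj : {in A &, injective proj_front}.
  by move=> x y xA yA eq_proj; apply: proj_front_lst_inj eq_proj (slice x y xA yA).
have -> : col_sum (prod_col c0 e) A = sgb (e (x0 lst)) * col_sum c0 (proj_front @: A).
  rewrite !col_sum_sgb (big_imset _ proj_inj) /= mulr_sumr; apply: eq_bigr => x xA.
  by rewrite ffunE sgb_eq (slice x x0) // mulrC.
rewrite abszM (_ : absz (sgb _) = 1%N) ?mul1n; last by case: (e _).
apply: leq_max_disc; exists (a \o widen_front), (b \o widen_front), l.
exact: progression_proj A_ap (exists_front_neq0 b0 (proj1 A_ap)).
Qed.

Lemma card_bad_signs (R : realType) A (t : R) : (0 < K)%N -> 0 <= t -> lst_injb A ->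
  #|[set e : {ffun 'I_K -> bool} | t < (absz (col_sum (prod_col c0 e) A))%:R]|%:R
    <= 2 * 2 ^+ K * expR (- t ^+ 2 / (2 * K%:R)).
Proof.
move=> K_gt0 t_ge0 /lst_injbP lst_inj.
under eq_finset => e do rewrite natr_absz intr_norm col_sum_prod_col.
by apply: card_norm_sign_sum_inj_gt => // x; rewrite normr_sgb.
Qed.

Lemma exists_good_signs (R : realType) (t : R) : (0 < K)%N -> 0 <= t ->
  ((\prod_(n <- N) n) ^ 2 * K.+1)%:R * (2 * 2 ^+ K * expR (- t ^+ 2 / (2 * K%:R)))
    < 2 ^+ K ->
  exists e, forall x0 x1 (k : 'I_K.+1), lst_injb (ap_set x0 x1 k) ->
    (absz (col_sum (prod_col c0 e) (ap_set x0 x1 k)))%:R <= t.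
Proof.
move=> K_gt0 t_ge0 lt_count.
pose bad (tau : pt N * pt N * 'I_K.+1) e := let A := ap_set tau.1.1 tau.1.2 tau.2 in
  lst_injb A && (t < (absz (col_sum (prod_col c0 e) A))%:R).
have [e good] : exists e, forall tau, ~~ bad tau e.
  apply: (exists_avoid_all (B := 2 * 2 ^+ K * expR (- t ^+ 2 / (2 * K%:R)))).
    move=> [[x0 x1] k]; rewrite /bad /=; case: (boolP (lst_injb _)) => [A_inj | _].
      by under eq_finset => e do rewrite /=; exact: card_bad_signs.
    rewrite (eq_finset (fun e => false)) ?cards0 //.
    by rewrite !mulr_ge0 ?exprn_ge0 ?expR_ge0.
  by rewrite !card_prod card_pt card_ffun card_bool !card_ord mulnn natrX.
by exists e => x0 x1 k A_inj; have := good (x0, x1, k); rewrite /bad /= A_inj -leNgt.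
Qed.

Lemma prod_col_ap_le (R : realDomainType) e (t : R) : 0 <= t ->
  (forall x0 x1 (k : 'I_K.+1), lst_injb (ap_set x0 x1 k) ->
    (absz (col_sum (prod_col c0 e) (ap_set x0 x1 k)))%:R <= t) ->
  forall A, isAP A -> (absz (col_sum (prod_col c0 e) A))%:R <= Num.max (max_disc c0)%:R t.
Proof.
move=> t_ge0 good A [a [b [l A_ap]]].
have {}A_ap : progression A a b l := A_ap.
have [b0 | b_neq0] := eqVneq (b lst) 0.
  by rewrite le_max ler_nat (col_sum_prod_col_slice _ b0 A_ap).
have [l0 | l_gt0] := posnP l.
  rewrite /col_sum big1 ?le_max ?ler0n // => x /(progression_mem A_ap)[i].
  by rewrite l0.
have [x0 [x1 A_eq]] := progression_ap_set A_ap l_gt0.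
have l_lt : (l < K.+1)%N by rewrite ltnS (progression_size A_ap b_neq0).
rewrite le_max A_eq (good x0 x1 (Ordinal l_lt)) ?orbT //= -A_eq.
apply/lst_injbP; exact (progression_inj A_ap b_neq0).
Qed.

End Projection.

Lemma leq_prod_mem (s : seq nat) n : all (fun m => 0 < m)%N s -> n \in s ->
  (n <= \prod_(m <- s) m)%N.
Proof.
move=> s_pos n_in; rewrite (big_rem n) //= leq_pmulr // big_seq.
by apply: prodn_cond_gt0 => m /mem_rem; apply: (allP s_pos).
Qed.

Lemma union_bound_threshold (R : realType) (K P : nat) (t : R) :
  (0 < K)%N -> (K <= P)%N -> t ^+ 2 = 6 * K%:R * ln (2 * P%:R) ->
  (P ^ 2 * K.+1)%:R * (2 * 2 ^+ K * expR (- t ^+ 2 / (2 * K%:R))) < 2 ^+ K.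
Proof.
move=> K_gt0 K_le t_sq.
have K_pos : (0 : R) < K%:R by rewrite ltr0n.
have P_ge1 : (1 : R) <= P%:R by rewrite ler1n; lia.
have ln_ge0 : 0 <= ln (2 * P%:R : R) by apply: ln_ge0; lra.
have -> : - t ^+ 2 / (2 * K%:R) = - (3%:R * ln (2 * P%:R : R)).
  by rewrite t_sq; field; rewrite lt0r_neq0.
rewrite expRN expRM_natl lnK ?posrE; last by lra.
have -> : (P ^ 2 * K.+1)%:R * (2 * 2 ^+ K * ((2 * P%:R) ^+ 3)^-1)
    = 2 ^+ K * ((K%:R + 1) / (4 * P%:R)) :> R.
  by rewrite natrM natrX -addn1 natrD; field; rewrite lt0r_neq0 //; lra.
rewrite gtr_pMr ?exprn_gt0 // ltr_pdivrMr; last by lra.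
have : (K%:R : R) <= P%:R by rewrite ler_nat.
have : (1 : R) <= K%:R by rewrite ler1n.
lra.
Qed.

Unset Implicit Arguments.

Theorem lemma6p1 (R : realType) (N : seq nat) :
  (2 <= size N)%N -> all (fun n => 0 < n)%N N ->
  ((disc N)%:R : R) <=
    Num.max (disc (take (size N).-1 N))%:R
      (Num.sqrt (6 * (last 0%N N)%:R * ln (2 * (\prod_(n <- N) n)%:R))).
Proof.
move=> size_N N_pos.
have lst_lt : ((size N).-1 < size N)%N by rewrite ltn_predL (leq_trans _ size_N).
pose lst := Ordinal lst_lt.
have lstE : lst = (size N).-1 :> nat by [].
have -> : last 0%N N = nth 0%N N lst by rewrite -nth_last.
have K_gt0 : (0 < nth 0%N N lst)%N := allP N_pos _ (mem_nth 0%N lst_lt).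
have K_le : (nth 0%N N lst <= \prod_(n <- N) n)%N.
  exact: leq_prod_mem N_pos (mem_nth 0%N lst_lt).
pose c0 := [arg min_(chi < [ffun=> true] : {ffun pt (front N) -> bool}) max_disc chi].
set t := Num.sqrt _.
have t_ge0 : 0 <= t := sqrtr_ge0 _.
have t_sq : t ^+ 2 = 6 * (nth 0%N N lst)%:R * ln (2 * (\prod_(n <- N) n)%:R).
  by rewrite sqr_sqrtr // !mulr_ge0 ?ler0n // ln_ge0 // -natrM ler1n; lia.
have [e good] := exists_good_signs c0 K_gt0 t_ge0 (union_bound_threshold K_gt0 K_le t_sq).
apply: (disc_ler (chi := prod_col c0 e)) => [| A A_ap].
  by rewrite le_max t_ge0 orbT.
exact (prod_col_ap_le lstE t_ge0 good A_ap).
Qed.
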